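(* Let $\mathbf{V}\in\mathbb{R}^{N\times N}$ and $\mathbf{A}\in\mathbb{R}^{T\times N}$ satisfy $\mathbf{1}_N^\top\mathbf{V}=\mathbf{1}_N^\top$, $\mathbf{1}_T^\top\mathbf{A}=\mathbf{1}_N^\top$, $\mathbf{V}\boldsymbol\mu=\boldsymbol\mu$. Then $$\mathbb{E}\hat\nabla_{\mathbf{A}}l=K_P\alpha_V(\alpha_V\alpha_A-1)\Big(\mathbf{Q}-\frac{\mathbf{1}_T\mathbf{1}_N^\top}{T}\Big)+K_P\alpha_V^2\boldsymbol\Delta_A+\|\boldsymbol\Delta_V\|_\mu^2\Big(\mathbf{A}-\frac{\mathbf{1}_T\mathbf{1}_N^\top}{T}\Big),$$ $$\mathbb{E}\hat\nabla_{\mathbf{V}}l=\alpha_AK_Q(\alpha_A\alpha_V-1)(\mathbf{P}-\boldsymbol\mu\mathbf{1}^\top)+\frac{\alpha_V-1}{T}(\mathbf{P}-\boldsymbol\mu\mathbf{1}^\top)+\Big(\alpha_A^2K_Q+\frac1T\Big)\boldsymbol\Delta_V+\|\boldsymbol\Delta_A\|_\mu^2(\mathbf{V}-\boldsymbol\mu\mathbf{1}^\top).$$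
   Context: $\boldsymbol\mu\in\mathbb{R}^N$ is a probability vector with positive entries; $\mathbf{P}\in\mathbb{R}^{N\times N}$ has nonnegative entries, columns summing to $1$, $\mathbf{P}\boldsymbol\mu=\boldsymbol\mu$; $\mathbf{Q}=(\mathbf{q}^{(1)},\dots,\mathbf{q}^{(N)})\in\mathbb{R}^{T\times N}$ has probability-vector columns. Data: $x_1,\dots,x_{T+1}$ i.i.d. with law $\boldsymbol\mu$, $x_o$ with $\Pr(x_o=n\mid x_{T+1}=k,x_1,\dots,x_T)=\sum_tq^{(k)}_tP_{n,x_t}$; $\mathbf{X}=(\mathbf{e}_{x_1},\dots,\mathbf{e}_{x_T})$; loss $l=\frac12\|\mathbf{e}_{x_o}-\mathbf{V}\mathbf{X}\mathbf{A}\mathbf{e}_{x_{T+1}}\|^2$; $\mathbf{a}^{(k)}$ the columns of $\mathbf{A}$. Preconditioned gradients: $\hat\nabla_{\mathbf{V}}l=(\mathbf{I}_N-\mathbf{1}\mathbf{1}^\top/N)(\nabla_{\mathbf{V}}l)\operatorname{diag}(1/\boldsymbol\mu)(\mathbf{I}_N-\boldsymbol\mu\boldsymbol\mu^\top/\|\boldsymbol\mu\|^2)$; $\hat\nabla_{\mathbf{A}}l$ is the $T\times N$ matrix with columns $\frac1{\mu_k}(\mathbf{I}_T-\mathbf{1}\mathbf{1}^\top/T)\nabla_{\mathbf{a}^{(k)}}l$. $\mathbb{E}$ is expectation over data with parameters fixed. $\langle\mathbf{M},\mathbf{M}'\rangle_\mu=\operatorname{Tr}(\mathbf{M}\operatorname{diag}(\boldsymbol\mu)\mathbf{M}'^\top)$,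 $\|\mathbf{M}\|_\mu^2=\langle\mathbf{M},\mathbf{M}\rangle_\mu$. $K_P=\|\mathbf{P}\|_\mu^2-\|\boldsymbol\mu\|^2>0$, $K_Q=\|\mathbf{Q}\|_\mu^2-1/T>0$, $\alpha_V=(\langle\mathbf{V},\mathbf{P}\rangle_\mu-\|\boldsymbol\mu\|^2)/K_P$, $\alpha_A=(\langle\mathbf{A},\mathbf{Q}\rangle_\mu-1/T)/K_Q$, $\boldsymbol\Delta_V=\mathbf{V}-\alpha_V\mathbf{P}-(1-\alpha_V)\boldsymbol\mu\mathbf{1}^\top$, $\boldsymbol\Delta_A=\mathbf{A}-\alpha_A\mathbf{Q}-(1-\alpha_A)\mathbf{1}\mathbf{1}^\top/T$. *)

From HB Require Import structures.
From mathcomp Require Import all_boot all_order all_algebra.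
From mathcomp Require Import all_classical all_reals.
From mathcomp Require Import topology normedtype derive.
Set Implicit Arguments. Unset Strict Implicit. Unset Printing Implicit Defensive.
Import Order.TTheory GRing.Theory Num.Theory numFieldNormedType.Exports.
Local Open Scope ring_scope.

Section Defs.
Variables (R : realType) (N T : nat).

Definition col_stochastic m (M : 'M[R]_(m, N)) : Prop :=
  (forall i j, 0 <= M i j) /\ (forall j, \sum_i M i j = 1).


Definition mu_inner m (mu : 'cV[R]_N) (M M' : 'M[R]_(m, N)) : R :=
  \tr (M *m diag_mx mu^T *m M'^T).
Definition mu_norm2 m (mu : 'cV[R]_N) (M : 'M[R]_(m, N)) : R := mu_inner mu M M.

Definition sqnorm (mu : 'cV[R]_N) : R := \sum_i mu i 0 ^+ 2.

(* X = (e_{x_1}, ..., e_{x_T}) *)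
Definition Xmat (x : 'I_T -> 'I_N) : 'M[R]_(N, T) := \matrix_(i, t) (i == x t)%:R.

(* loss l = 1/2 || e_{x_o} - V X A e_{x_{T+1}} ||^2, with k = x_{T+1}, o = x_o *)
Definition loss (V : 'M[R]_N) (A : 'M[R]_(T, N)) (x : 'I_T -> 'I_N) (k o : 'I_N) : R :=
  2^-1 * \sum_i ((i == o)%:R - (V *m Xmat x *m (A *m delta_mx k (0 : 'I_1))) i 0) ^+ 2.

Definition gradV V A x k o : 'M[R]_N :=
  \matrix_(i, j) derive1 (fun s : R => loss (V + s *: delta_mx i j) A x k o) 0.
Definition gradA V A x k o : 'M[R]_(T, N) :=
  \matrix_(i, j) derive1 (fun s : R => loss V (A + s *: delta_mx i j) x k o) 0.

Definition hat_gradV (mu : 'cV[R]_N) V A x k o : 'M[R]_N :=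
  (1%:M - const_mx (N%:R^-1)) *m gradV V A x k o
  *m diag_mx (\row_i (mu i 0)^-1)
  *m (1%:M - (sqnorm mu)^-1 *: (mu *m mu^T)).
Definition hat_gradA (mu : 'cV[R]_N) V A x k o : 'M[R]_(T, N) :=
  \matrix_(t, j) ((mu j 0)^-1 *
     (((1%:M - const_mx (T%:R^-1)) : 'M[R]_T) *m col j (gradA V A x k o)) t 0).

Definition data_prob (mu : 'cV[R]_N) (P : 'M[R]_N) (Q : 'M[R]_(T, N))
  (x : {ffun 'I_T -> 'I_N}) (k o : 'I_N) : R :=
  (\prod_t mu (x t) 0) * mu k 0 * (\sum_t Q t k * P o (x t)).

Definition Edata m n (mu : 'cV[R]_N) (P : 'M[R]_N) (Q : 'M[R]_(T, N))
  (f : ('I_T -> 'I_N) -> 'I_N -> 'I_N -> 'M[R]_(m, n)) : 'M[R]_(m, n) :=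
  \sum_(x : {ffun 'I_T -> 'I_N}) \sum_k \sum_o data_prob mu P Q x k o *: f x k o.

Definition K_P mu (P : 'M[R]_N) : R := mu_norm2 mu P - sqnorm mu.
Definition K_Q mu (Q : 'M[R]_(T, N)) : R := mu_norm2 mu Q - T%:R^-1.
Definition alpha_V mu P (V : 'M[R]_N) : R :=
  (mu_inner mu V P - sqnorm mu) / K_P mu P.
Definition alpha_A mu Q (A : 'M[R]_(T, N)) : R :=
  (mu_inner mu A Q - T%:R^-1) / K_Q mu Q.
Definition Delta_V mu P V : 'M[R]_N :=
  V - alpha_V mu P V *: P - (1 - alpha_V mu P V) *: (mu *m (const_mx 1 : 'rV[R]_N)).
Definition Delta_A mu Q A : 'M[R]_(T, N) :=
  A - alpha_A mu Q A *: Q - (1 - alpha_A mu Q A) *: const_mx (T%:R^-1).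

End Defs.

From HB Require Import structures.
From mathcomp Require Import all_boot all_order all_algebra.
From mathcomp Require Import all_classical all_reals.
From mathcomp Require Import topology normedtype derive.
From mathcomp Require Import ring.
Import Order.TTheory GRing.Theory Num.Theory numFieldNormedType.Exports.
Local Open Scope ring_scope.
Set Implicit Arguments. Unset Strict Implicit. Unset Printing Implicit Defensive.

(* The output V X A e_k is affine in each single entry of V and of A, so the
   gradients are explicit polynomials in the one-hot data.  Given x_1..x_T and
   x_{T+1} = k, the target e_{x_o} averages to sum_u Q_{uk} P e_{x_u}; what
   remains is a sum over pairs (s, t) of products f(x_s) g(x_t) of i.i.d.
   tokens.  The off-diagonal pairs contribute only products of means, and these
   cancel because P mu = V mu = mu and the columns of A and Q sum to 1.  Hence
     E grad_V = (|A|^2 (V - mu 1^T) - <A,Q> (P - mu 1^T)) diag mu,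
     E grad_A = ((|V|^2 - |mu|^2) A - (<V,P> - |mu|^2) Q) diag mu,
   with all norms and inner products weighted by mu.  The preconditioners cancel
   diag mu and remove the constant parts, and the stated decomposition is the
   Pythagorean identity
     |M - a M' - (1 - a) C|^2 = |M|^2 - |C|^2 - a^2 (|M'|^2 - |C|^2)
   for the mu-orthogonal projection of M onto the line through C and M',
   applied with C = mu 1^T and C = 1 1^T / T. *)

Section RingMatrices.
Variable R : pzRingType.

Lemma sum_delta_mull n (F : 'I_n -> R) i : \sum_l (l == i)%:R * F l = F i.
Proof.
rewrite (bigD1 i) //= eqxx mul1r big1 ?addr0 // => l /negbTE ->.
by rewrite mul0r.
Qed.

Lemma sum_delta_mulr n (F : 'I_n -> R) i : \sum_l F l * (l == i)%:R = F i.
Proof.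
rewrite (bigD1 i) //= eqxx mulr1 big1 ?addr0 // => l /negbTE ->.
by rewrite mulr0.
Qed.

Lemma const_mx_mul_colsum m n p (c s : R) (M : 'M[R]_(n, p)) :
  (forall j, \sum_l M l j = s) -> (const_mx c : 'M_(m, n)) *m M = const_mx (c * s).
Proof.
move=> M_colsum; apply/matrixP => i j; rewrite !mxE -(M_colsum j) mulr_sumr.
by apply: eq_bigr => l _; rewrite mxE.
Qed.

Lemma colsum_of_row1 m n (M : 'M[R]_(m, n)) :
  (const_mx 1 : 'rV_m) *m M = const_mx 1 -> forall j, \sum_i M i j = 1.
Proof.
move=> /matrixP M_row1 j; move: (M_row1 0 j); rewrite !mxE => <-.
by apply: eq_bigr => i _; rewrite mxE mul1r.
Qed.

End RingMatrices.

Section QuadraticDerivative.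
Variable R : realType.

Lemma derive1_quadratic (a b c : R) (f : R -> R) :
  (forall s, f s = a + b * s + c * s ^+ 2) -> derive1 f 0 = b.
Proof.
move=> fE; have -> : f = horner (a%:P + b *: 'X + c *: 'X^2).
  by apply/funext => s; rewrite fE !hornerE.
rewrite derive1E (@derive_val _ _ _ _ _ _ _ (is_derive_poly _ _)).
by rewrite !(derivD, derivZ, derivC, derivX, derivXn) !hornerE /=; ring.
Qed.

Lemma derive1_half_sqdist n (f : R -> R) (c e d : 'I_n -> R) :
  (forall s, f s = 2^-1 * \sum_l (c l - (e l + s * d l)) ^+ 2) ->
  derive1 f 0 = - \sum_l (c l - e l) * d l.
Proof.
move=> fE; apply: (derive1_quadratic (a := 2^-1 * \sum_l (c l - e l) ^+ 2)
  (c := 2^-1 * \sum_l d l ^+ 2)) => s.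
rewrite fE !mulr_sumr !mulr_suml -sumrN !mulr_suml -!big_split /=.
by apply: eq_bigr => l _; field.
Qed.

End QuadraticDerivative.

Section Gradients.
Variables (R : realType) (N T : nat).
Implicit Types (V : 'M[R]_N) (A : 'M[R]_(T, N)) (x : 'I_T -> 'I_N).

Lemma mulmx_XmatE V x l t : (V *m Xmat R x) l t = V l (x t).
Proof.
rewrite mxE -[RHS](sum_delta_mulr (V l) (x t)).
by apply: eq_bigr => m _; rewrite mxE.
Qed.

Lemma loss_outputE V A x k l :
  (V *m Xmat R x *m (A *m delta_mx k (0 : 'I_1))) l 0 = \sum_s A s k * V l (x s).
Proof.
by rewrite mxE; apply: eq_bigr => s _; rewrite mulmx_XmatE -colE mxE mulrC.
Qed.

Lemma gradV_entry V A x k o i j :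
  gradV V A x k o i j =
  (\sum_t (x t == j)%:R * A t k) * (\sum_s A s k * V i (x s) - (o == i)%:R).
Proof.
rewrite mxE (@derive1_half_sqdist _ _ _ (fun l => (l == o)%:R)
  (fun l => \sum_s A s k * V l (x s))
  (fun l => (l == i)%:R * \sum_t (x t == j)%:R * A t k)) => [|s].
  rewrite [o == i]eq_sym -sumrN.
  rewrite -[in RHS](sum_delta_mull (fun l => \sum_s A s k * V l (x s) - (l == o)%:R) i).
  by rewrite mulr_sumr; apply: eq_bigr => l _; ring.
rewrite /loss; congr (_ * _); apply: eq_bigr => l _; rewrite loss_outputE.
rewrite !mulr_sumr -big_split; congr ((_ - _) ^+ 2); apply: eq_bigr => t _.
by rewrite /= !mxE -mulnb natrM; ring.
Qed.

Lemma gradA_entry V A x k o t j :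
  gradA V A x k o t j =
  (k == j)%:R * (\sum_l (\sum_s A s k * V l (x s)) * V l (x t) - V o (x t)).
Proof.
rewrite mxE (@derive1_half_sqdist _ _ _ (fun l => (l == o)%:R)
  (fun l => \sum_s A s k * V l (x s)) (fun l => (k == j)%:R * V l (x t))) => [|s].
  rewrite -sumrN -[V o (x t)](sum_delta_mull (fun l => V l (x t)) o) -sumrB mulr_sumr.
  by apply: eq_bigr => l _; ring.
rewrite /loss; congr (_ * _); apply: eq_bigr => l _; rewrite loss_outputE.
congr ((_ - _) ^+ 2); rewrite -[V l (x t)](sum_delta_mull (fun r => V l (x r)) t).
by rewrite !mulr_sumr -big_split; apply: eq_bigr => r _; rewrite /= !mxE -mulnb natrM; ring.
Qed.

End Gradients.

Section IidExpectation.
Variables (R : realType) (N T : nat) (mu : 'cV[R]_N).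

Definition iid_prob (x : {ffun 'I_T -> 'I_N}) : R := \prod_t mu (x t) 0.
Definition mean (f : 'I_N -> R) : R := \sum_l mu l 0 * f l.

Lemma mean_row (M : 'M[R]_N) l : M *m mu = mu -> mean (M l) = mu l 0.
Proof.
move=> /matrixP /(_ l 0); rewrite mxE => <-.
by apply: eq_bigr => m _; rewrite mulrC.
Qed.

Lemma mean_delta_mulr (F : 'I_N -> R) j : mean (fun m => F m * (m == j)%:R) = mu j 0 * F j.
Proof.
by rewrite -(sum_delta_mulr (fun m => mu m 0 * F m) j); apply: eq_bigr => m _; rewrite mulrA.
Qed.

Lemma expect_prod (h : 'I_T -> 'I_N -> R) :
  \sum_(x : {ffun 'I_T -> 'I_N}) iid_prob x * \prod_t h t (x t) = \prod_t mean (h t).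
Proof. by rewrite bigA_distr_bigA; apply: eq_bigr => x _; rewrite -big_split. Qed.

Lemma prod_if_eq (F : 'I_T -> R) t : \prod_r (if r == t then F r else 1) = F t.
Proof. by rewrite -big_mkcond big_pred1_eq. Qed.

Hypothesis mu_sum1 : \sum_l mu l 0 = 1.

Lemma mean1 : mean (fun=> 1) = 1.
Proof. by rewrite -[RHS]mu_sum1; apply: eq_bigr => l _; rewrite mulr1. Qed.

Lemma expect_pair t s (f g : 'I_N -> R) :
  \sum_(x : {ffun 'I_T -> 'I_N}) iid_prob x * (f (x t) * g (x s)) =
  if t == s then mean (fun l => f l * g l) else mean f * mean g.
Proof.
pose h r l := (if r == t then f l else 1) * (if r == s then g l else 1).
transitivity (\prod_r mean (h r)).
  rewrite -expect_prod; apply: eq_bigr => x _; congr (_ * _).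
  by rewrite big_split /= (prod_if_eq (fun r => f (x r))) (prod_if_eq (fun r => g (x r))).
have [ets|ts] := eqVneq t s; first subst s.
  rewrite -(prod_if_eq (fun=> mean (fun l => f l * g l)) t); apply: eq_bigr => r _.
  by rewrite /h; case: (r == t); rewrite ?mulr1 ?mean1.
rewrite -(prod_if_eq (fun=> mean f) t) -(prod_if_eq (fun=> mean g) s) -big_split /=.
apply: eq_bigr => r _; rewrite /h.
have [->|rt] := eqVneq r t.
  by rewrite (negbTE ts) mulr1; apply: eq_bigr => l _; rewrite mulr1.
by case: (r == s); rewrite ?mulr1 ?mul1r ?mean1 //; apply: eq_bigr => l _; rewrite mul1r.
Qed.

Lemma expect_sum_mul (phi : 'I_T -> 'I_N -> R) (g : 'I_N -> R) t :
  \sum_(x : {ffun 'I_T -> 'I_N}) iid_prob x * ((\sum_s phi s (x s)) * g (x t)) =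
  (\sum_s mean (phi s)) * mean g + (mean (fun l => phi t l * g l) - mean (phi t) * mean g).
Proof.
under eq_bigr do rewrite mulr_suml mulr_sumr.
rewrite exchange_big /=; under eq_bigr do rewrite expect_pair.
rewrite (bigD1 t) //= eqxx mulr_suml [in RHS](bigD1 t) //=.
rewrite (eq_bigr (fun s => mean (phi s) * mean g)) => [|s /negbTE]; first by ring.
by rewrite eq_sym => ->.
Qed.

End IidExpectation.

Section MuInnerProduct.
Variables (R : realType) (N m : nat) (mu : 'cV[R]_N).
Implicit Types M C : 'M[R]_(m, N).

Lemma mu_innerE M M' :
  mu_inner mu M M' = \sum_i \sum_j M i j * mu j 0 * M' i j.
Proof.
rewrite /mu_inner /mxtrace; apply: eq_bigr => i _.
by rewrite mxE; apply: eq_bigr => j _; rewrite mul_mx_diag !mxE.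
Qed.

Lemma mu_innerE_col M M' :
  mu_inner mu M M' = \sum_j mu j 0 * \sum_i M i j * M' i j.
Proof.
rewrite mu_innerE exchange_big; apply: eq_bigr => j _.
by rewrite mulr_sumr; apply: eq_bigr => i _; ring.
Qed.

Lemma mu_innerC M M' : mu_inner mu M M' = mu_inner mu M' M.
Proof. by rewrite !mu_innerE; apply: eq_bigr => i _; apply: eq_bigr => j _; ring. Qed.

Lemma mu_innerBl M1 M2 M' : mu_inner mu (M1 - M2) M' = mu_inner mu M1 M' - mu_inner mu M2 M'.
Proof. by rewrite /mu_inner !mulmxBl linearB. Qed.

Lemma mu_innerBr M M1 M2 : mu_inner mu M (M1 - M2) = mu_inner mu M M1 - mu_inner mu M M2.
Proof. by rewrite ![mu_inner mu M _]mu_innerC mu_innerBl. Qed.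

Lemma mu_innerZl a M M' : mu_inner mu (a *: M) M' = a * mu_inner mu M M'.
Proof. by rewrite /mu_inner -!scalemxAl linearZ. Qed.

Lemma mu_innerZr a M M' : mu_inner mu M (a *: M') = a * mu_inner mu M M'.
Proof. by rewrite mu_innerC mu_innerZl mu_innerC. Qed.

Lemma mu_norm2_subZ M M' a :
  mu_norm2 mu (M - a *: M') =
  mu_norm2 mu M - 2 * a * mu_inner mu M M' + a ^+ 2 * mu_norm2 mu M'.
Proof.
rewrite /mu_norm2 mu_innerBl !mu_innerBr !mu_innerZl !mu_innerZr [mu_inner mu M' M]mu_innerC.
by ring.
Qed.

Lemma mu_inner_center M M' C :
  mu_inner mu M C = mu_norm2 mu C -> mu_inner mu M' C = mu_norm2 mu C ->
  mu_inner mu (M - C) (M' - C) = mu_inner mu M M' - mu_norm2 mu C.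
Proof.
move=> MC M'C; rewrite mu_innerBl !mu_innerBr [mu_inner mu C M']mu_innerC MC M'C.
by rewrite /mu_norm2; ring.
Qed.

Lemma mu_norm2_affine_residual M M' C a :
  mu_inner mu M C = mu_norm2 mu C -> mu_inner mu M' C = mu_norm2 mu C ->
  a * (mu_norm2 mu M' - mu_norm2 mu C) = mu_inner mu M M' - mu_norm2 mu C ->
  mu_norm2 mu (M - a *: M' - (1 - a) *: C) =
  mu_norm2 mu M - mu_norm2 mu C - a ^+ 2 * (mu_norm2 mu M' - mu_norm2 mu C).
Proof.
move=> MC M'C aE.
have -> : M - a *: M' - (1 - a) *: C = (M - C) - a *: (M' - C).
  by apply/matrixP => i j; rewrite !mxE; ring.
rewrite mu_norm2_subZ /mu_norm2 !mu_inner_center // -/(mu_norm2 mu M') -aE.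
by rewrite /mu_norm2; ring.
Qed.

End MuInnerProduct.

Section CenteringMatrices.
Variables (R : realType) (N : nat) (mu : 'cV[R]_N).
Hypothesis mu_sum1 : \sum_l mu l 0 = 1.

Lemma mu_inner_mu1 (M : 'M[R]_N) :
  M *m mu = mu -> mu_inner mu M (mu *m const_mx 1) = sqnorm mu.
Proof.
move=> /matrixP Mmu; rewrite mu_innerE; apply: eq_bigr => i _.
rewrite expr2 -{2}(Mmu i 0) mxE mulr_sumr; apply: eq_bigr => j _.
by rewrite mxE big_ord1 mxE; ring.
Qed.

Lemma mu1_mul_mu : mu *m const_mx 1 *m mu = mu.
Proof.
apply/matrixP => i z; rewrite [z]ord1 -mulmxA mxE big_ord1 mxE.
by rewrite (eq_bigr (fun l => mu l 0)) ?mu_sum1 ?mulr1 // => l _; rewrite mxE mul1r.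
Qed.

Lemma mu_norm2_mu1 : mu_norm2 mu (mu *m const_mx 1) = sqnorm mu.
Proof. exact/mu_inner_mu1/mu1_mul_mu. Qed.

Lemma centered_mul_mu (M : 'M[R]_N) : M *m mu = mu -> (M - mu *m const_mx 1) *m mu = 0.
Proof. by move=> M_mu; rewrite mulmxBl M_mu mu1_mul_mu // subrr. Qed.

Lemma mu_inner_const T (M : 'M[R]_(T, N)) c :
  (forall j, \sum_t M t j = 1) -> mu_inner mu M (const_mx c) = c.
Proof.
move=> M_colsum; rewrite mu_innerE_col (eq_bigr (fun j => mu j 0 * c)) => [|j _].
  by rewrite -mulr_suml mu_sum1 mul1r.
by under eq_bigr do rewrite mxE; rewrite -mulr_suml M_colsum mul1r.
Qed.

(* Also true for T = 0, where T%:R^-1 = 0. *)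
Lemma mu_norm2_const_inv T : mu_norm2 mu (const_mx (T%:R^-1) : 'M[R]_(T, N)) = T%:R^-1.
Proof.
rewrite /mu_norm2 mu_innerE_col.
have col_sum j : \sum_t (const_mx (T%:R^-1) : 'M[R]_(T, N)) t j * const_mx (T%:R^-1) t j
    = T%:R^-1.
  rewrite (eq_bigr (fun=> T%:R^-1 * T%:R^-1)) => [|t _]; last by rewrite !mxE.
  rewrite sumr_const card_ord.
  have [->|T0] := eqVneq T 0%N; first by rewrite mulr0n invr0.
  by rewrite -[_ *+ T]mulr_natr -mulrA mulVf ?mulr1 ?pnatr_eq0.
under eq_bigr do rewrite col_sum.
by rewrite -mulr_suml mu_sum1 mul1r.
Qed.

End CenteringMatrices.

Section ExpectedGradients.
Variables (R : realType) (N T : nat).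
Variables (mu : 'cV[R]_N) (P V : 'M[R]_N) (Q A : 'M[R]_(T, N)).
Hypothesis mu_sum1 : \sum_l mu l 0 = 1.
Hypotheses (P_colsum : forall j, \sum_i P i j = 1) (Q_colsum : forall j, \sum_t Q t j = 1).
Hypothesis A_colsum : forall j, \sum_t A t j = 1.
Hypotheses (P_mu : P *m mu = mu) (V_mu : V *m mu = mu).

Lemma Edata_entry m n (f : ('I_T -> 'I_N) -> 'I_N -> 'I_N -> 'M[R]_(m, n)) i j :
  Edata mu P Q f i j =
  \sum_(x : {ffun 'I_T -> 'I_N}) \sum_k \sum_o data_prob mu P Q x k o * f x k o i j.
Proof.
rewrite /Edata summxE; apply: eq_bigr => x _; rewrite summxE; apply: eq_bigr => k _.
by rewrite summxE; apply: eq_bigr => o _; rewrite mxE.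
Qed.

Lemma sum_data_prob_sub x k (a : R) (G : 'I_N -> R) :
  \sum_o data_prob mu P Q x k o * (a - G o) =
  iid_prob mu x * mu k 0 * (a - \sum_u Q u k * \sum_o P o (x u) * G o).
Proof.
pose q o := \sum_u Q u k * P o (x u).
have q_sum1 : \sum_o q o = 1.
  rewrite exchange_big -[RHS](Q_colsum k); apply: eq_bigr => u _.
  by rewrite -mulr_sumr P_colsum mulr1.
have qG : \sum_o q o * G o = \sum_u Q u k * \sum_o P o (x u) * G o.
  under eq_bigr do rewrite mulr_suml.
  rewrite exchange_big; apply: eq_bigr => u _.
  by rewrite mulr_sumr; apply: eq_bigr => o _; rewrite mulrA.
rewrite -qG -[a in RHS]mulr1 -q_sum1 mulr_sumr -sumrB mulr_sumr.
by apply: eq_bigr => o _; rewrite /data_prob /iid_prob -/(q o); ring.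
Qed.

Lemma expect_residual_mul k l t (g : 'I_N -> R) :
  \sum_(x : {ffun 'I_T -> 'I_N}) iid_prob mu x *
    ((\sum_s (A s k * V l (x s) - Q s k * P l (x s))) * g (x t)) =
  mean mu (fun m => (A t k * V l m - Q t k * P l m) * g m)
  - (A t k - Q t k) * mu l 0 * mean mu g.
Proof.
have mean_phi s : mean mu (fun m => A s k * V l m - Q s k * P l m) = (A s k - Q s k) * mu l 0.
  rewrite /mean (eq_bigr (fun m => A s k * (mu m 0 * V l m) - Q s k * (mu m 0 * P l m)));
    last by move=> m _; ring.
  by rewrite sumrB -!mulr_sumr -!/(mean mu _) !mean_row //; ring.
rewrite (expect_sum_mul mu_sum1 (fun s m => A s k * V l m - Q s k * P l m)).
rewrite (eq_bigr _ (fun s _ => mean_phi s)) mean_phi -mulr_suml sumrB A_colsum Q_colsum.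
by ring.
Qed.

Lemma expect_gradV_at k i j :
  \sum_(x : {ffun 'I_T -> 'I_N}) \sum_o data_prob mu P Q x k o * gradV V A x k o i j =
  mu k 0 * mu j 0 * \sum_t (A t k * A t k * (V i j - mu i 0) - A t k * Q t k * (P i j - mu i 0)).
Proof.
under eq_bigr => x _ do
  (under eq_bigr => o _ do rewrite gradV_entry mulrCA; rewrite -mulr_sumr sum_data_prob_sub).
transitivity (\sum_t mu k 0 * A t k * \sum_(x : {ffun 'I_T -> 'I_N}) iid_prob mu x *
  ((\sum_s (A s k * V i (x s) - Q s k * P i (x s))) * (x t == j)%:R)).
  under eq_bigr => x _ do under [X in _ - X]eq_bigr => u _ do rewrite sum_delta_mulr.
  under [RHS]eq_bigr do rewrite mulr_sumr; rewrite [RHS]exchange_big /=.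
  apply: eq_bigr => x _; rewrite sumrB mulr_suml; apply: eq_bigr => t _; ring.
rewrite mulr_sumr; apply: eq_bigr => t _.
rewrite (expect_residual_mul _ _ _ (fun m => (m == j)%:R)) mean_delta_mulr.
by rewrite /mean sum_delta_mulr; ring.
Qed.

Lemma expect_gradA_at k t j :
  \sum_(x : {ffun 'I_T -> 'I_N}) \sum_o data_prob mu P Q x k o * gradA V A x k o t j =
  (k == j)%:R * (mu k 0 *
  (A t k * (mu_norm2 mu V - sqnorm mu) - Q t k * (mu_inner mu V P - sqnorm mu))).
Proof.
under eq_bigr => x _ do
  (under eq_bigr => o _ do rewrite gradA_entry mulrCA; rewrite -mulr_sumr sum_data_prob_sub).
transitivity ((k == j)%:R * mu k 0 * \sum_l \sum_(x : {ffun 'I_T -> 'I_N}) iid_prob mu x *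
  ((\sum_s (A s k * V l (x s) - Q s k * P l (x s))) * V l (x t))).
  rewrite [in RHS]exchange_big mulr_sumr; apply: eq_bigr => x _.
  have -> : \sum_u Q u k * \sum_o P o (x u) * V o (x t) =
      \sum_l (\sum_s Q s k * P l (x s)) * V l (x t).
    under eq_bigr do rewrite mulr_sumr; rewrite exchange_big; apply: eq_bigr => l _.
    by rewrite mulr_suml; apply: eq_bigr => s _; ring.
  rewrite -sumrB !mulr_sumr; apply: eq_bigr => l _; rewrite sumrB; ring.
under eq_bigr do rewrite expect_residual_mul mean_row //.
have mean_sum : \sum_l mean mu (fun m => (A t k * V l m - Q t k * P l m) * V l m) =
    A t k * mu_norm2 mu V - Q t k * mu_inner mu V P.
  rewrite /mu_norm2 !mu_innerE !mulr_sumr -sumrB; apply: eq_bigr => l _.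
  by rewrite !mulr_sumr -sumrB; apply: eq_bigr => m _; ring.
rewrite sumrB mean_sum.
have -> : \sum_l (A t k - Q t k) * mu l 0 * mu l 0 = (A t k - Q t k) * sqnorm mu.
  by rewrite mulr_sumr; apply: eq_bigr => l _; rewrite expr2 mulrA.
ring.
Qed.

Lemma Edata_gradV :
  Edata mu P Q (gradV V A) =
  (mu_norm2 mu A *: (V - mu *m const_mx 1) - mu_inner mu A Q *: (P - mu *m const_mx 1))
  *m diag_mx mu^T.
Proof.
apply/matrixP => i j; rewrite Edata_entry exchange_big /=.
under eq_bigr do rewrite expect_gradV_at.
rewrite mul_mx_diag !mxE !big_ord1 !mxE !mulr1 /mu_norm2 !mu_innerE_col.
rewrite !mulr_suml -sumrB mulr_suml; apply: eq_bigr => k _.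
by rewrite sumrB -!mulr_suml; ring.
Qed.

Lemma Edata_gradA :
  Edata mu P Q (gradA V A) =
  ((mu_norm2 mu V - sqnorm mu) *: A - (mu_inner mu V P - sqnorm mu) *: Q) *m diag_mx mu^T.
Proof.
apply/matrixP => t j; rewrite Edata_entry exchange_big /=.
under eq_bigr do rewrite expect_gradA_at.
rewrite (sum_delta_mull (fun k => mu k 0 * (A t k * (mu_norm2 mu V - sqnorm mu)
  - Q t k * (mu_inner mu V P - sqnorm mu))) j).
by rewrite mul_mx_diag !mxE; ring.
Qed.

End ExpectedGradients.

Section Preconditioning.
Variables (R : realType) (N T : nat).
Variables (mu : 'cV[R]_N) (P V : 'M[R]_N) (Q A : 'M[R]_(T, N)).

Lemma Edata_mulmx m n p q (L : 'M[R]_(m, n)) (M : 'M[R]_(p, q))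
    (f : ('I_T -> 'I_N) -> 'I_N -> 'I_N -> 'M[R]_(n, p)) :
  Edata mu P Q (fun x k o => L *m f x k o *m M) = L *m Edata mu P Q f *m M.
Proof.
rewrite /Edata mulmx_sumr mulmx_suml; apply: eq_bigr => x _.
rewrite mulmx_sumr mulmx_suml; apply: eq_bigr => k _.
rewrite mulmx_sumr mulmx_suml; apply: eq_bigr => o _.
by rewrite -scalemxAr -scalemxAl.
Qed.

Lemma hat_gradA_mulmx :
  hat_gradA mu V A = fun x k o =>
    (1%:M - const_mx (T%:R^-1)) *m gradA V A x k o *m diag_mx (\row_i (mu i 0)^-1).
Proof.
apply/funext => x; apply/funext => k; apply/funext => o; apply/matrixP => t j.
rewrite mul_mx_diag !mxE mulrC; congr (_ * _).
by apply: eq_bigr => s _; rewrite !mxE.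
Qed.

Lemma hat_gradV_mulmx :
  hat_gradV mu V A = fun x k o =>
    (1%:M - const_mx (N%:R^-1)) *m gradV V A x k o
    *m (diag_mx (\row_i (mu i 0)^-1) *m (1%:M - (sqnorm mu)^-1 *: (mu *m mu^T))).
Proof. by apply/funext => x; apply/funext => k; apply/funext => o; rewrite /hat_gradV mulmxA. Qed.

Lemma diag_mu_mul_inv : (forall i, mu i 0 != 0) ->
  diag_mx mu^T *m diag_mx (\row_i (mu i 0)^-1) = 1%:M.
Proof.
move=> mu_neq0; rewrite mulmx_diag; apply/matrixP => i j; rewrite !mxE.
by case: (eqVneq i j) => [->|_]; rewrite ?mulr1n ?mulr0n // mulfV.
Qed.

End Preconditioning.

Section MainIdentities.
Variables (R : realType) (N T : nat).
Variables (mu : 'cV[R]_N) (P V : 'M[R]_N) (Q A : 'M[R]_(T, N)).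
Hypotheses (mu_neq0 : forall i, mu i 0 != 0) (mu_sum1 : \sum_l mu l 0 = 1).
Hypotheses (P_colsum : forall j, \sum_i P i j = 1) (Q_colsum : forall j, \sum_t Q t j = 1).
Hypotheses (V_colsum : forall j, \sum_i V i j = 1) (A_colsum : forall j, \sum_t A t j = 1).
Hypotheses (P_mu : P *m mu = mu) (V_mu : V *m mu = mu).
Hypotheses (KP_neq0 : K_P mu P != 0) (KQ_neq0 : K_Q mu Q != 0).

Lemma Edata_hat_gradA :
  Edata mu P Q (hat_gradA mu V A) =
  (mu_norm2 mu V - sqnorm mu) *: (A - const_mx (T%:R^-1))
  - (mu_inner mu V P - sqnorm mu) *: (Q - const_mx (T%:R^-1)).
Proof.
set a := mu_norm2 mu V - sqnorm mu; set b := mu_inner mu V P - sqnorm mu.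
rewrite hat_gradA_mulmx Edata_mulmx Edata_gradA // -/a -/b -!mulmxA diag_mu_mul_inv // mulmx1.
rewrite mulmxBl mul1mx (@const_mx_mul_colsum _ _ _ _ _ (a - b)) => [|j].
  by apply/matrixP => t j; rewrite !mxE; ring.
by under eq_bigr do rewrite !mxE; rewrite sumrB -!mulr_sumr A_colsum Q_colsum !mulr1.
Qed.

Lemma Edata_hat_gradV :
  Edata mu P Q (hat_gradV mu V A) =
  mu_norm2 mu A *: (V - mu *m const_mx 1) - mu_inner mu A Q *: (P - mu *m const_mx 1).
Proof.
set W := _ - _.
have W_mu : W *m mu = 0.
  by rewrite mulmxBl -!scalemxAl !centered_mul_mu // !scaler0 subr0.
have W_colsum j : \sum_l W l j = 0.
  rewrite (eq_bigr (fun l => mu_norm2 mu A * (V l j - mu l 0)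
    - mu_inner mu A Q * (P l j - mu l 0))) => [|l _]; last by rewrite !mxE big_ord1 !mxE mulr1.
  by rewrite sumrB -!mulr_sumr !sumrB V_colsum P_colsum mu_sum1 subrr !mulr0 subr0.
rewrite hat_gradV_mulmx Edata_mulmx Edata_gradV // -/W.
rewrite -!mulmxA (mulmxA (diag_mx _)) diag_mu_mul_inv // mul1mx.
rewrite mulmxBr mulmx1 -scalemxAr mulmxA W_mu mul0mx scaler0 subr0.
by rewrite mulmxBl mul1mx (const_mx_mul_colsum _ _ W_colsum) mulr0 subr0.
Qed.

Lemma mu_inner_alpha_V : mu_inner mu V P = alpha_V mu P V * K_P mu P + sqnorm mu.
Proof. by rewrite /alpha_V divfK // subrK. Qed.

Lemma mu_inner_alpha_A : mu_inner mu A Q = alpha_A mu Q A * K_Q mu Q + T%:R^-1.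
Proof. by rewrite /alpha_A divfK // subrK. Qed.

Lemma mu_norm2_Delta_V :
  mu_norm2 mu (Delta_V mu P V) = mu_norm2 mu V - sqnorm mu - alpha_V mu P V ^+ 2 * K_P mu P.
Proof.
rewrite /Delta_V mu_norm2_affine_residual ?mu_norm2_mu1 ?mu_inner_mu1 //.
by rewrite mu_inner_alpha_V addrK.
Qed.

Lemma mu_norm2_Delta_A :
  mu_norm2 mu (Delta_A mu Q A) = mu_norm2 mu A - T%:R^-1 - alpha_A mu Q A ^+ 2 * K_Q mu Q.
Proof.
rewrite /Delta_A mu_norm2_affine_residual ?mu_norm2_const_inv ?mu_inner_const //.
by rewrite mu_inner_alpha_A addrK.
Qed.

End MainIdentities.

Theorem lemmaC4 (R : realType) (N T : nat)
  (mu : 'cV[R]_N) (P : 'M[R]_N) (Q : 'M[R]_(T, N))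
  (V : 'M[R]_N) (A : 'M[R]_(T, N)) :
  (forall i, 0 < mu i 0) -> \sum_i mu i 0 = 1 ->
  col_stochastic P -> P *m mu = mu ->
  col_stochastic Q ->
  0 < K_P mu P -> 0 < K_Q mu Q ->
  (const_mx 1 : 'rV[R]_N) *m V = (const_mx 1 : 'rV[R]_N) -> (const_mx 1 : 'rV[R]_T) *m A = (const_mx 1 : 'rV[R]_N) -> V *m mu = mu ->
  Edata mu P Q (hat_gradA mu V A) =
    (K_P mu P * alpha_V mu P V * (alpha_V mu P V * alpha_A mu Q A - 1))
      *: (Q - const_mx (T%:R^-1))
    + (K_P mu P * alpha_V mu P V ^+ 2) *: Delta_A mu Q A
    + mu_norm2 mu (Delta_V mu P V) *: (A - const_mx (T%:R^-1))
  /\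
  Edata mu P Q (hat_gradV mu V A) =
    (alpha_A mu Q A * K_Q mu Q * (alpha_A mu Q A * alpha_V mu P V - 1))
      *: (P - mu *m (const_mx 1 : 'rV[R]_N))
    + ((alpha_V mu P V - 1) / T%:R) *: (P - mu *m (const_mx 1 : 'rV[R]_N))
    + (alpha_A mu Q A ^+ 2 * K_Q mu Q + T%:R^-1) *: Delta_V mu P V
    + mu_norm2 mu (Delta_A mu Q A) *: (V - mu *m (const_mx 1 : 'rV[R]_N)).
Proof.
move=> mu_pos mu_sum1 [_ P_colsum] P_mu [_ Q_colsum] KP_gt0 KQ_gt0 V_row1 A_row1 V_mu.
have mu_neq0 i : mu i 0 != 0 by rewrite gt_eqF.
have [KP_neq0 KQ_neq0] : K_P mu P != 0 /\ K_Q mu Q != 0 by rewrite !gt_eqF.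
have V_colsum := colsum_of_row1 V_row1; have A_colsum := colsum_of_row1 A_row1.
rewrite Edata_hat_gradA // Edata_hat_gradV // mu_norm2_Delta_V // mu_norm2_Delta_A //.
rewrite mu_inner_alpha_V // mu_inner_alpha_A // addrK.
by split; apply/matrixP => i j; rewrite !mxE; ring.
Qed.
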